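(* For the alternate network mining strategy, Phase 1 lasts on average $n_0\tau_0\delta$ and Phase 2 lasts on average $n_0\tau_0/\delta$. The attacker's revenue ratio is $\rho$ during Phase 1 and $\rho\delta$ during Phase 2. Consequently, the revenue ratio of the alternate network mining strategy is $$\frac{1+\delta}{\delta+\frac1\delta}\,\rho.$$
   Context: Alternate network mining (ANM) model. Two networks (e.g. BTC and BCH) use the same proof-of-work algorithm, and switching between them is frictionless. There are three types of miners: those mining only on BTC, those mining only on BCH, and an ''attacker'' who alternates. All miners mine at full power, and the total hash power is constant. Honest mining yields the same revenue ratio $\rho$ for the attacker on both networks. The BTC difficulty is adjusted every $n_0$ BTC blocks, so that blocks arrive every $\tau_0$ on average at the hash power observed during the previous period. The attacker starts at a BTC difficulty adjustment, with difficulty calibrated for the full hash power including his own. An attack cycle has two phases. In Phase 1, the attacker mines honestly on BCH until $n_0$ blocks are mined on BTC. In Phase 2, he mines honestly on BTC until the next BTC difficulty adjustment. $\delta>1$ denotes the difficulty adjustment parameter after Phase 1, i.e. the ratio of the mean duration of Phase 1 to $n_0\tau_0$. The difficulty is divided by $\delta$ at the end of Phase 1, and the adjustment at the end of Phase 2 has parameter $1/\delta$. The revenue ratio of the strategy is (mean revenue per cycle)/(mean cycle duration). *)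

From Stdlib Require Import Reals.
Open Scope R_scope.

(* Hash powers are constant; a network with difficulty D mined with total
   hash power h produces blocks with mean inter-block time D / h
   (the difficulty is measured so that this is the definition of D).
   A miner with hash power a among total power h earns the fraction a/h of
   the blocks, each paying the block reward. *)
Record ANM := mkANM {
  n0 : nat;          (* BTC difficulty adjustment period (in blocks) *)
  tau0 : R;          (* BTC target inter-block time *)
  hBTC : R;          (* hash power of miners mining only on BTC *)
  hBCH : R;          (* hash power of miners mining only on BCH *)
  hAtt : R;
  rewardBTC : R;
  rewardBCH : R;
  diffBCH : R        (* BCH difficulty (constant during the cycle) *)
}.

Definition mean_block_time (D h : R) : R := D / h.

(* revenue per unit time of a miner with hash a mining honestly on a network
   of total hash h (including a), difficulty D and block reward b *)
Definition honest_revenue_rate (D h a b : R) : R :=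
  (a / h) * (1 / mean_block_time D h) * b.

(* initial BTC difficulty: calibrated for the full BTC hash power including
   the attacker, so that blocks arrive every tau0 on average *)
Definition D0 (p : ANM) : R := tau0 p * (hBTC p + hAtt p).

Definition rho (p : ANM) : R :=
  honest_revenue_rate (D0 p) (hBTC p + hAtt p) (hAtt p) (rewardBTC p).

Definition rhoBCH (p : ANM) : R :=
  honest_revenue_rate (diffBCH p) (hBCH p + hAtt p) (hAtt p) (rewardBCH p).

(* Phase 1: attacker mines on BCH until n0 blocks are mined on BTC
   (BTC is mined by hBTC only, at difficulty D0). *)
Definition phase1_duration (p : ANM) : R :=
  INR (n0 p) * mean_block_time (D0 p) (hBTC p).

Definition delta (p : ANM) : R := phase1_duration p / (INR (n0 p) * tau0 p).

Definition D1 (p : ANM) : R := D0 p / delta p.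

(* Phase 2: attacker mines honestly on BTC until next adjustment (n0 blocks) *)
Definition phase2_duration (p : ANM) : R :=
  INR (n0 p) * mean_block_time (D1 p) (hBTC p + hAtt p).

Definition phase1_revenue (p : ANM) : R := rhoBCH p * phase1_duration p.
Definition phase2_revenue (p : ANM) : R :=
  honest_revenue_rate (D1 p) (hBTC p + hAtt p) (hAtt p) (rewardBTC p)
  * phase2_duration p.

Definition anm_revenue_ratio (p : ANM) : R :=
  (phase1_revenue p + phase2_revenue p) / (phase1_duration p + phase2_duration p).

From Stdlib Require Import Reals Lra Lia.
Open Scope R_scope.

(* Write N = n0, t = tau0, b = hBTC, a = hAtt.  Everything reduces to
   closed forms in these quantities:
   - a miner's honest revenue rate a/h * h/D * r = a r / D does not depend on
     the total hash power h; in particular rho = a r / D0 with D0 = t (b + a);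
   - Phase 1 lasts N D0 / b = N t (b + a) / b, so delta = (b + a) / b > 1,
     and Phase 1 lasts N t delta by the very definition of delta;
   - dividing the difficulty by delta gives Phase 2 duration N t / delta and
     multiplies the revenue rate by delta, i.e. rate rho * delta;
   - Phase 1 pays rhoBCH = rho per unit time by hypothesis.
   A purely algebraic averaging lemma for two phases of durations c delta and
   c / delta with rates rho and rho delta then yields the revenue ratio
   (1 + delta) / (delta + 1 / delta) * rho of the whole cycle. *)

Lemma honest_revenue_rate_eq (D h a r : R) :
  h <> 0 -> D <> 0 -> honest_revenue_rate D h a r = a * r / D.
Proof.
  intros Hh HD. unfold honest_revenue_rate, mean_block_time.
  field; auto.
Qed.

Lemma two_phase_revenue_ratio (c d r : R) :
  0 < c -> 0 < d ->
  (r * (c * d) + r * d * (c / d)) / (c * d + c / d)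
  = (1 + d) / (d + 1 / d) * r.
Proof.
  intros Hc Hd.
  assert (Hsum : 0 < d * d + 1) by nra.
  field; repeat split; nra.
Qed.

Section ANMCycle.

Variable p : ANM.
Hypothesis n0_pos : (0 < n0 p)%nat.
Hypothesis tau0_pos : 0 < tau0 p.
Hypothesis hBTC_pos : 0 < hBTC p.
Hypothesis hAtt_pos : 0 < hAtt p.

Let N_pos : 0 < INR (n0 p).
Proof. apply lt_0_INR; lia. Qed.

Let D0_pos : 0 < D0 p.
Proof. unfold D0. apply Rmult_lt_0_compat; lra. Qed.

Lemma delta_eq : delta p = (hBTC p + hAtt p) / hBTC p.
Proof.
  unfold delta, phase1_duration, mean_block_time, D0.
  field; repeat split; lra.
Qed.

(* Without the attacker BTC blocks come slower than targeted, so Phase 1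
   overruns n0 * tau0 and the difficulty is lowered; this also makes delta
   nonzero, which the divisions below need. *)
Lemma delta_gt_1 : 1 < delta p.
Proof.
  rewrite delta_eq.
  apply (Rmult_lt_reg_r (hBTC p)); [lra |].
  unfold Rdiv; rewrite Rmult_assoc, Rinv_l; lra.
Qed.

Lemma phase1_duration_eq :
  phase1_duration p = INR (n0 p) * tau0 p * delta p.
Proof.
  unfold delta. field.
  split; apply Rgt_not_eq; [exact tau0_pos | exact N_pos].
Qed.

Lemma phase2_duration_eq :
  phase2_duration p = INR (n0 p) * tau0 p / delta p.
Proof.
  pose proof delta_gt_1.
  unfold phase2_duration, mean_block_time, D1, D0.
  field; repeat split; lra.
Qed.

Lemma phase2_rate_eq :
  honest_revenue_rate (D1 p) (hBTC p + hAtt p) (hAtt p) (rewardBTC p)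
  = rho p * delta p.
Proof.
  pose proof delta_gt_1.
  assert (HD1 : 0 < D1 p) by (unfold D1; apply Rdiv_lt_0_compat; lra).
  unfold rho.
  rewrite !honest_revenue_rate_eq by lra.
  unfold D1. field; lra.
Qed.

End ANMCycle.

Theorem mainTheorem11 (p : ANM) :
  (0 < n0 p)%nat -> 0 < tau0 p -> 0 < hBTC p -> 0 <= hBCH p -> 0 < hAtt p ->
  0 < rewardBTC p -> 0 < rewardBCH p -> 0 < diffBCH p ->
  rhoBCH p = rho p ->
  phase1_duration p = INR (n0 p) * tau0 p * delta p /\
  phase2_duration p = INR (n0 p) * tau0 p / delta p /\
  phase1_revenue p / phase1_duration p = rho p /\
  phase2_revenue p / phase2_duration p = rho p * delta p /\
  anm_revenue_ratio p = (1 + delta p) / (delta p + 1 / delta p) * rho p.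
Proof.
  intros Hn Ht Hb _ Ha _ _ _ Hrho.
  pose proof (delta_gt_1 p Hn Ht Hb Ha) as Hdelta.
  assert (Hc : 0 < INR (n0 p) * tau0 p)
    by (apply Rmult_lt_0_compat; [apply lt_0_INR; lia | lra]).
  pose proof (phase1_duration_eq p Hn Ht) as HT1.
  pose proof (phase2_duration_eq p Hn Ht Hb Ha) as HT2.
  assert (HT1_pos : 0 < phase1_duration p) by (rewrite HT1; nra).
  assert (HT2_pos : 0 < phase2_duration p)
    by (rewrite HT2; apply Rdiv_lt_0_compat; lra).
  unfold anm_revenue_ratio, phase1_revenue, phase2_revenue.
  rewrite (phase2_rate_eq p Hn Ht Hb Ha), Hrho.
  split; [exact HT1 |]. split; [exact HT2 |].
  split; [field; lra |]. split; [field; lra |].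
  rewrite HT1, HT2.
  apply two_phase_revenue_ratio; lra.
Qed.
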